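(* Let $n=2m+1\ge 3$ be odd, let $\theta$ be a generator of $\mathrm{Gal}(\mathbb{F}_{2^n}/\mathbb{F}_2)$, and let $G=A(n,\theta)$. Let $C\subseteq G$ be a union of conjugacy classes of elements of order $4$, obtained by choosing, for each pair $\{K,K^{(-1)}\}$ consisting of a conjugacy class $K$ of elements of order $4$ and its inverse class $K^{(-1)}=\{k^{-1}:k\in K\}$, exactly one of $K$ and $K^{(-1)}$. (In $G$ no class of elements of order $4$ equals its inverse class, so $C\cap C^{(-1)}=\emptyset$ and $C$ consists of exactly half of the conjugacy classes of elements of order 4.) Then the continuous-time quantum walk on the oriented Cayley graph $\mathrm{Cay}(G,C)$ has uniform mixing at time $\tau=\pi/2^{n+1}$, i.e. all entries of $e^{\tau S}$ have the same absolute value, where $S$ is the skew adjacency matrix of $\mathrm{Cay}(G,C)$.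
   Context: Let $\mathbb{F}_{2^n}$ be the field with $2^n$ elements and write $a^\theta$ for the image of $a$ under the field automorphism $\theta$. $A(n,\theta)$ is the group (under matrix multiplication) of $3\times 3$ matrices $\begin{bmatrix}1&a&b\\0&1&a^\theta\\0&0&1\end{bmatrix}$ with $a,b\in\mathbb{F}_{2^n}$; writing $(a,b)$ for this matrix, $(a,b)(c,d)=(a+c,\,b+d+ac^\theta)$. For a finite group $G$ and a subset $C\subseteq G$ with $1\notin C$, the Cayley digraph $\mathrm{Cay}(G,C)$ has vertex set $G$ and an arc from $g$ to $cg$ for every $g\in G$, $c\in C$; it is oriented when $C\cap C^{(-1)}=\emptyset$, where $C^{(-1)}=\{c^{-1}:c\in C\}$. For an oriented graph, the skew adjacency matrix $S$ is indexed by vertices, with $(u,v)$ entry $1$ if $(u,v)$ is an arc, $-1$ if $(v,u)$ is an arc, and $0$ otherwise. The quantum walk has transition matrices $U(t)=e^{tS}$, and it has uniform mixing at time $\tau$ if all entries of $U(\tau)$ have the same absolute value. *)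

From HB Require Import structures.
From mathcomp Require Import all_boot all_order all_algebra all_fingroup all_field.
From mathcomp Require Import all_classical all_reals all_analysis.
From mathcomp Require Import ring.
Set Implicit Arguments. Unset Strict Implicit. Unset Printing Implicit Defensive.
Import Order.TTheory GRing.Theory Num.Theory.
Import numFieldNormedType.Exports.

Definition Agrp (F : finFieldType) (th : {rmorphism F -> F}) : Type := (F * F)%type.

Section AGroup.
Variables (F : finFieldType) (th : {rmorphism F -> F}).
Local Open Scope ring_scope.

HB.instance Definition _ := Finite.on (Agrp th).

Definition Amul (x y : Agrp th) : Agrp th :=
  (x.1 + y.1, x.2 + y.2 + x.1 * th y.1).
Definition Aone : Agrp th := (0, 0).
Definition Ainv (x : Agrp th) : Agrp th := (- x.1, - x.2 + x.1 * th x.1).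

Lemma AmulA : associative Amul.
Proof.
move=> [a b] [c d] [e f]; rewrite /Amul /=; congr (_, _); first by rewrite addrA.
rewrite rmorphD /=; ring.
Qed.

Lemma Amul1 : left_id Aone Amul.
Proof. by move=> [a b]; rewrite /Amul /= !add0r mul0r addr0. Qed.

Lemma AmulV : left_inverse Aone Ainv Amul.
Proof.
move=> [a b]; rewrite /Amul /Aone /=; congr (_, _); first by rewrite addNr.
ring.
Qed.

HB.instance Definition _ := Finite_isGroup.Build (Agrp th) AmulA Amul1 AmulV.

End AGroup.

Section Skew.
Variables (gT : finGroupType) (R : realType).
Local Open Scope ring_scope.

Definition is_arc (C : {set gT}) (u v : gT) : bool := (v * u^-1)%g \in C.

Definition skew_adj (C : {set gT}) : 'M[R]_#|gT| :=
  \matrix_(i, j)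
    (if is_arc C (enum_val i) (enum_val j) then 1
     else if is_arc C (enum_val j) (enum_val i) then -1 else 0).
End Skew.

Section Expm.
Variables (R : realType) (N : nat).
Local Open Scope ring_scope.

Definition mxpow (A : 'M[R]_N) (k : nat) : 'M[R]_N := iter k (mulmx A) 1%:M.

Definition expm (t : R) (A : 'M[R]_N) : 'M[R]_N :=
  \matrix_(i, j) (limn (series (fun k : nat => t ^+ k / (k`!)%:R * mxpow A k i j))).

Definition uniform_mixing (S : 'M[R]_N) (tau : R) : Prop :=
  forall i j i' j', `|expm tau S i j| = `|expm tau S i' j'|.
End Expm.

(* Let q = 2^n. The skew adjacency matrix S of Cay(G, C) is the group matrix
   M f = (f (v u^-1))_(u,v) of the function f that is 1 on C, -1 on C^(-1) and
   0 elsewhere, and M turns convolution of functions on G into matrix product.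
   Let Tr be the trace of F over F_2 (via th) and N a = a th(a). Conjugation in
   G together with the additive Hilbert 90 gives f (a, b) = f (a, 0) (-1)^Tr(b / N a)
   for a <> 0, while f vanishes on the subgroup Z = {(0, b)}. Orthogonality of
   the character (-1)^Tr and injectivity of N (n is odd) then give
   S^2 = -q^2 I + q J with J = M 1_Z and J S = 0. Hence S^3 = -q^2 S,
   e^(tS) = I + sin(qt)/q S + (1 - cos(qt))/q^2 S^2, and at t = pi/(2q) this is
   (S + J)/q, whose entries are all +-1/q. *)

From HB Require Import structures.
From mathcomp Require Import all_boot all_order all_algebra all_fingroup all_field.
From mathcomp Require Import all_classical all_reals all_analysis.
From mathcomp Require Import cyclic ring zify.
Import Order.TTheory GRing.Theory Num.Theory.
Set Implicit Arguments. Unset Strict Implicit. Unset Printing Implicit Defensive.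
Import numFieldNormedType.Exports.
Local Open Scope ring_scope.

Section GroupMatrix.
Variables (gT : finGroupType) (R : pzRingType).

Definition group_mx (phi : gT -> R) : 'M[R]_#|gT| :=
  \matrix_(i, j) phi (enum_val j * (enum_val i)^-1)%g.

Definition convg (phi chi : gT -> R) (h : gT) : R := \sum_x phi x * chi (h * x^-1)%g.

Lemma mul_group_mx phi chi : group_mx phi *m group_mx chi = group_mx (convg phi chi).
Proof.
apply/matrixP => i j; rewrite !mxE.
under eq_bigr => k _ do rewrite !mxE.
pose F v := phi (v * (enum_val i)^-1)%g * chi (enum_val j * v^-1)%g.
have -> : \sum_(k < #|gT|) F (enum_val k) = \sum_v F v by rewrite -big_enum_val.
rewrite (reindex_inj (mulIg (enum_val i))) /=; apply: eq_bigr => x _.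
by rewrite /F mulgK invMg mulgA.
Qed.

Lemma group_mx1 : group_mx (fun h => (h == 1%g)%:R) = 1%:M.
Proof.
apply/matrixP => i j; rewrite !mxE -eq_mulgV1 eq_sym.
by rewrite (inj_eq enum_val_inj).
Qed.

Lemma group_mx0 : group_mx (fun=> 0) = 0.
Proof. by apply/matrixP => i j; rewrite !mxE. Qed.

Lemma group_mx_lin a b phi chi :
  group_mx (fun h => a * phi h + b * chi h) = a *: group_mx phi + b *: group_mx chi.
Proof. by apply/matrixP => i j; rewrite !mxE. Qed.

Definition skew_sign (C : {set gT}) (g : gT) : R :=
  if g \in C then 1 else if (g^-1)%g \in C then -1 else 0.

Section ClassClosed.
Variable C : {set gT}.
Hypothesis C_classes : forall c, c \in C -> (c ^: [set: gT] \subset C)%g.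

Lemma class_sub_closed g : (g ^: [set: gT] \subset C)%g = (g \in C).
Proof.
apply/idP/idP => [/fintype.subsetP|/C_classes //]; apply.
exact: (class_refl [set: gT]%G g).
Qed.

Lemma invclass_sub_closed g : ((g ^: [set: gT])^-1 \subset C)%g = ((g^-1)%g \in C).
Proof.
apply/idP/idP => [/fintype.subsetP|/C_classes /fintype.subsetP sub]; first by apply; rewrite mem_invg invgK class_refl.
apply/fintype.subsetP => y; rewrite mem_invg => /imsetP[h _ yE].
by apply: sub; rewrite -[y]invgK yE -conjVg memJ_class ?inE.
Qed.

Lemma skew_signJ g h : skew_sign C (g ^ h)%g = skew_sign C g.
Proof.
have memJ x : ((x ^ h)%g \in C) = (x \in C).
  by rewrite -class_sub_closed classGidl ?inE // class_sub_closed.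
by rewrite /skew_sign -conjVg !memJ.
Qed.
End ClassClosed.

Lemma skew_sign_xor (C : {set gT}) g :
  (g \in C) (+) ((g^-1)%g \in C) -> skew_sign C g = (-1) ^+ ((g^-1)%g \in C).
Proof. by rewrite /skew_sign; case: (g \in C); case: (_ \in C). Qed.

Lemma skew_signV (C : {set gT}) g :
  (g \in C) (+) ((g^-1)%g \in C) -> skew_sign C (g^-1)%g = - skew_sign C g.
Proof. by rewrite /skew_sign invgK; case: (g \in C); case: (_ \in C); rewrite ?opprK. Qed.

End GroupMatrix.

Lemma sum_ord_double (V : nmodType) (h : nat -> V) k :
  \sum_(i < k.*2) h i = \sum_(j < k) (h j.*2 + h j.*2.+1).
Proof.
elim: k => [|k IH]; first by rewrite !big_ord0.
by rewrite doubleS !big_ord_recr /= IH addrA.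
Qed.

Lemma idempotent_eq01 (K : idomainType) (x : K) : x ^+ 2 = x -> x = 0 \/ x = 1.
Proof.
move=> x2; have : x * (x - 1) == 0 by rewrite mulrBr mulr1 -expr2 x2 subrr.
by rewrite mulf_eq0 subr_eq0 => /orP[/eqP|/eqP]; [left|right].
Qed.

Section OddDegreeField.
Variables (F : finFieldType) (th : {rmorphism F -> F}) (m : nat).
Hypothesis cardF : #|F| = (2 ^ (2 * m + 1))%N.
Hypothesis th_generates : forall sigma : {rmorphism F -> F}, bijective sigma ->
  exists k : nat, forall x, sigma x = iter k th x.

Local Notation n := (2 * m + 1)%N.

Lemma pchar2F : 2%N \in [pchar F].
Proof. exact: (card_finPcharP cardF). Qed.

Lemma expF_card (x : F) : x ^+ (2 ^ n) = x.
Proof. by rewrite -cardF expf_card. Qed.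

Lemma th_fixed (x : F) : th x = x -> x = 0 \/ x = 1.
Proof.
move=> thx.
have [k frobE] := th_generates (injF_bij (fmorph_inj (pFrobenius_aut pchar2F))).
apply: idempotent_eq01.
by rewrite -(pFrobenius_autE pchar2F) frobE; elim: k {frobE} => //= k ->.
Qed.

(* th x is a root of prod_i ('X - x^(2^i)), whose coefficients are fixed by
   the Frobenius map and hence by th. *)
Lemma th_frobenius_power (x : F) : exists i, th x = x ^+ (2 ^ i).
Proof.
pose g i := x ^+ (2 ^ i).
pose P := \prod_(a <- map g (index_iota 0 n)) ('X - a%:P).
have PE : P = \prod_(0 <= i < n) ('X - (g i)%:P) by rewrite /P big_map.
pose frob := (pFrobenius_aut pchar2F : {rmorphism F -> F}).
have frob_g i : frob (g i) = g i.+1 by rewrite /frob /= pFrobenius_autE /g -exprM expnSr.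
have frobP : map_poly frob P = P.
  rewrite PE rmorph_prod /=.
  under eq_bigr => i _ do rewrite map_polyXsubC frob_g.
  have shift : \prod_(1 <= i < n.+1) ('X - (g i)%:P) =
      \prod_(0 <= i < n) ('X - (g i.+1)%:P) by rewrite big_add1.
  rewrite -shift big_nat_recr ?addn1 //= [X in _ = X]big_ltn ?addn1 //.
  by rewrite mulrC /g expn0 expr1 -[(2 * m).+1]addn1 expF_card.
have thP : map_poly th P = P.
  apply/polyP => i; rewrite coef_map /=.
  have frob_c : frob P`_i = P`_i by rewrite -coef_map frobP.
  have [->|->] : P`_i = 0 \/ P`_i = 1; rewrite ?rmorph0 ?rmorph1 //.
  by apply: idempotent_eq01; rewrite -(pFrobenius_autE pchar2F) frob_c.
have Px : root P x.
  by rewrite root_prod_XsubC; apply/mapP; exists 0%N; rewrite ?mem_index_iota ?addn1.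
have : root P (th x) by rewrite /root -thP horner_map (eqP Px) rmorph0.
by rewrite root_prod_XsubC => /mapP[i _ ->]; exists i.
Qed.

Lemma iter_th_n (x : F) : iter n th x = x.
Proof.
have [i thx] := th_frobenius_power x.
have iterE k : iter k th x = x ^+ ((2 ^ i) ^ k).
  elim: k => [|k IH] /=; first by rewrite expn0 expr1.
  by rewrite IH rmorphXn thx -exprM expnS.
rewrite iterE expnAC; elim: i {thx iterE} => [|i IH]; first by rewrite expn0 expr1.
by rewrite expnS exprM expF_card.
Qed.

Lemma iter_thD k (x y : F) : iter k th (x + y) = iter k th x + iter k th y.
Proof. by elim: k => //= k ->; rewrite rmorphD. Qed.

Lemma iter_th1 k : iter k th 1 = 1 :> F.
Proof. by elim: k => //= k ->; rewrite rmorph1. Qed.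

Definition trace (x : F) : F := \sum_(i < n) iter i th x.

Lemma traceD x y : trace (x + y) = trace x + trace y.
Proof. by rewrite /trace -big_split /=; apply: eq_bigr => i _; rewrite iter_thD. Qed.

Lemma trace0 : trace 0 = 0.
Proof. by apply: (addIr (trace 0)); rewrite -traceD !add0r. Qed.

Lemma trace1 : trace 1 = 1.
Proof.
rewrite /trace (eq_bigr (fun _ => 1)) => [|i _]; last exact: iter_th1.
by rewrite sumr_const card_ord natrD natrM (pcharf0 pchar2F) mul0r add0r.
Qed.

Lemma th_trace x : th (trace x) = trace x.
Proof.
rewrite /trace rmorph_sum /=.
have recr : \sum_(i < n.+1) iter i th x = \sum_(i < n) iter i th x + x.
  by rewrite big_ord_recr /= iter_th_n.
have recl : \sum_(i < n.+1) iter i th x = x + \sum_(i < n) iter i.+1 th x.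
  by rewrite big_ord_recl.
by apply: (addIr x); rewrite -recr recl addrC.
Qed.

Lemma trace_01 x : trace x = 0 \/ trace x = 1.
Proof. exact/th_fixed/th_trace. Qed.

(* For u = sum_(j <= m) th^(2j) w, u + th u = Tr w + th^n w = w. *)
Lemma hilbert90 w : trace w = 0 -> exists u, u + th u = w.
Proof.
move=> trw0; exists (\sum_(j < m.+1) iter j.*2 th w).
rewrite rmorph_sum -big_split /=.
under eq_bigr => j _ do rewrite -iterS.
rewrite -(sum_ord_double (fun i => iter i th w)).
have -> : (m.+1).*2 = n.+1 by rewrite -addnn; lia.
by rewrite big_ord_recr /= -/(trace w) trw0 add0r iter_th_n.
Qed.

Definition normth (a : F) : F := a * th a.

Lemma normth_eq0 a : (normth a == 0) = (a == 0).
Proof. by rewrite /normth mulf_eq0 fmorph_eq0 orbb. Qed.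

(* For b != 0, r = a / b satisfies th r = r^-1, so th^n r = th r as n is odd;
   since th^n r = r, this forces r^2 = 1, i.e. r = 1. *)
Lemma normth_inj : injective normth.
Proof.
move=> a b Nab.
have [b0|b_neq0] := eqVneq b 0.
  by apply/eqP; rewrite b0 -normth_eq0 Nab b0 /normth mul0r.
have a_neq0 : a != 0 by rewrite -normth_eq0 Nab normth_eq0.
pose r := a / b.
have r_neq0 : r != 0 by rewrite mulf_neq0 ?invr_eq0.
have thr : th r = r^-1.
  apply: (mulfI r_neq0); rewrite divrr ?unitfE //.
  rewrite /r rmorphM fmorphV /= mulrACA -invfM -/(normth a) -/(normth b) Nab divrr //.
  by rewrite unitfE normth_eq0.
have iter2 j : iter j.*2 th r = r by elim: j => // j IH; rewrite doubleS /= IH thr fmorphV thr invrK.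
have := iter_th_n r; rewrite addn1 mul2n /= iter2 thr => r_inv.
have : (r - 1) * (r - 1) == 0.
  have -> : (r - 1) * (r - 1) = r * r + 1 - 2%:R * r by ring.
  by rewrite -{1}r_inv mulVf // (pcharf0 pchar2F) mul0r subr0 (addrr_pchar2 pchar2F).
rewrite mulf_eq0 orbb subr_eq0 => /eqP r1.
by apply: (mulIf (invr_neq0 b_neq0)); rewrite -/r r1 divrr // unitfE.
Qed.

Variable R : numFieldType.

Definition addchar (x : F) : R := if trace x == 0 then 1 else -1.

Lemma addcharD x y : addchar (x + y) = addchar x * addchar y.
Proof.
rewrite /addchar traceD.
case: (trace_01 x) (trace_01 y) => -> [] ->;
  by rewrite ?addr0 ?add0r ?(addrr_pchar2 pchar2F) ?eqxx ?oner_eq0 ?mulrNN ?mulr1 ?mul1r.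
Qed.

Lemma addchar0 : addchar 0 = 1.
Proof. by rewrite /addchar trace0 eqxx. Qed.

Lemma addchar1 : addchar 1 = -1.
Proof. by rewrite /addchar trace1 oner_eq0. Qed.

Lemma sum_addchar_mul l : l != 0 -> \sum_b addchar (l * b) = 0.
Proof.
move=> l_neq0; set S := \sum_b _.
have S_opp : S = - S.
  rewrite {1}/S (reindex_inj (addIr l^-1)) /= -sumrN; apply: eq_bigr => b _.
  by rewrite mulrDr divrr ?unitfE // addcharD addchar1 mulrN1.
have : S *+ 2 == 0 by rewrite mulr2n {2}S_opp subrr.
by rewrite mulrn_eq0 => /eqP.
Qed.

Local Notation q := (#|F|%:R : R).

(* a |-> c / N a is a bijection of F when c != 0, including at a = 0 since
   c / 0 = 0. *)
Lemma sum_addchar_div_normth c : \sum_a addchar (c / normth a) = (c == 0)%:R * q.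
Proof.
have [->|c_neq0] := eqVneq c 0.
  by rewrite (eq_bigr (fun=> 1)) => [|a _]; rewrite ?mul0r ?addchar0 // sumr_const mul1r.
have inj : injective (fun a => c / normth a).
  by move=> a b /(mulfI c_neq0) /invr_inj /normth_inj.
have sum0 : \sum_b addchar b = 0.
  by rewrite -[RHS](sum_addchar_mul (oner_neq0 F)); apply: eq_bigr => b _; rewrite mul1r.
by rewrite (reindex_inj inj) in sum0; rewrite mul0r.
Qed.

Local Notation G := (Agrp th).

Lemma Agrp_mulE (x y : G) : (x * y)%g = (x.1 + y.1, x.2 + y.2 + x.1 * th y.1).
Proof. by []. Qed.

Lemma Agrp_invE (x : G) : (x^-1)%g = (x.1, x.2 + normth x.1).
Proof.
have -> : (x^-1)%g = (- x.1, - x.2 + x.1 * th x.1) by [].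
by rewrite !(oppr_pchar2 pchar2F).
Qed.

Lemma Agrp_oneE : (1 : G)%g = (0, 0).
Proof. by []. Qed.

Lemma sum_Agrp (phi : G -> R) : \sum_x phi x = \sum_a \sum_b phi (a, b).
Proof. by rewrite pair_big; apply: eq_bigr => -[a b]. Qed.

Lemma Agrp_sqr (x : G) : (x * x)%g = (0, normth x.1).
Proof. by rewrite Agrp_mulE !(addrr_pchar2 pchar2F) add0r. Qed.

Lemma order_Agrp (x : G) : (#[x]%g == 4) = (x.1 != 0).
Proof.
have x4 : (x ^+ 4 = 1)%g.
  have -> : (x ^+ 4 = (x * x) * (x * x))%g by rewrite !expgS expg0 mulg1 !mulgA.
  by rewrite Agrp_sqr Agrp_mulE /= (addrr_pchar2 pchar2F) /normth mul0r.
have sqr1 : (x ^+ 2 == 1)%g = (x.1 == 0).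
  by rewrite expgS expg1 Agrp_sqr Agrp_oneE xpair_eqE eqxx normth_eq0.
rewrite -sqr1 -order_dvdn.
have : (#[x]%g %| 4)%N by rewrite order_dvdn x4.
have := order_gt0 x; case: #[x]%g => [|[|[|[|[|k]]]]] //.
Qed.

Lemma Agrp_conjE (a b c d : F) :
  (((a, b) : G) ^ ((c, d) : G))%g = (a, b + a * th c + c * th a).
Proof.
rewrite -[c * th a](oppr_pchar2 pchar2F) conjgE.
have -> : (((c, d) : G)^-1)%g = (- c, - d + c * th c) by [].
by rewrite !Agrp_mulE /=; congr (_, _); ring.
Qed.

Lemma Agrp_mulVE (h x : G) :
  (h * x^-1)%g = (h.1 + x.1, h.2 + x.2 + normth x.1 + h.1 * th x.1).
Proof. by rewrite Agrp_invE Agrp_mulE /= addrA. Qed.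

Variable C : {set G}.
Hypothesis C_order4 : forall c, c \in C -> #[c]%g = 4%N.
Hypothesis C_classes : forall c, c \in C -> (c ^: [set: G] \subset C)%g.
Hypothesis C_choice : forall g : G, #[g]%g = 4%N ->
  ((g ^: [set: G] \subset C) (+) ((g ^: [set: G])^-1 \subset C))%g.

Local Notation f := (skew_sign R C).

Lemma mem_C_xor (g : G) : g.1 != 0 -> (g \in C) (+) ((g^-1)%g \in C).
Proof.
move=> g1; have /C_choice : #[g]%g = 4%N by apply/eqP; rewrite order_Agrp.
by rewrite class_sub_closed // invclass_sub_closed.
Qed.

Lemma skew_sign_center (g : G) : g.1 = 0 -> f g = 0.
Proof.
have notC (x : G) : x.1 = 0 -> x \notin C.
  by move=> x1; apply/negP => /C_order4/eqP; rewrite order_Agrp x1 eqxx.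
by move=> g1; rewrite /skew_sign (negPf (notC g g1)) (negPf (notC _ _)) // Agrp_invE.
Qed.

Definition eps (a : F) : R := f (a, 0).

Lemma eps_sqr a : a != 0 -> eps a * eps a = 1.
Proof. by move=> a0; rewrite /eps skew_sign_xor ?mem_C_xor // -expr2 sqrr_sign. Qed.

(* Hilbert 90 makes (a, b) conjugate to (a, 0) when Tr (b / N a) = 0; otherwise
   its inverse (a, b + N a) is. *)
Lemma skew_signE (x : G) :
  f x = (x.1 != 0)%:R * eps x.1 * addchar (x.2 / normth x.1).
Proof.
case: x => a b /=; have [->|a0] := eqVneq a 0; first by rewrite skew_sign_center ?mul0r.
rewrite mul1r; have Na0 : normth a != 0 by rewrite normth_eq0.
have conj_a0 b' : trace (b' / normth a) = 0 -> f (a, b') = eps a.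
  move=> /hilbert90[u Hu].
  have -> : ((a, b') : G) = (((a, 0) : G) ^ (((a * u)%R, 0) : G))%g.
    by rewrite Agrp_conjE add0r -[b'](divfK Na0) -Hu rmorphM /= /normth; congr (_, _); ring.
  exact: skew_signJ.
rewrite /addchar; case: (trace_01 (b / normth a)) => trb.
  by rewrite trb eqxx mulr1 conj_a0.
have inv_b : trace ((b + normth a) / normth a) = 0.
  by rewrite mulrDl divff // traceD trb trace1 (addrr_pchar2 pchar2F).
have := skew_signV R (mem_C_xor (g := (a, b)) a0).
rewrite Agrp_invE /= conj_a0 // => ->.
by rewrite trb oner_eq0 mulrN1 opprK.
Qed.

Lemma sum_skew_sign_mulV a al be : a != 0 -> al + a != 0 ->
  \sum_b f (a, b) * f (((al, be) : G) * ((a, b) : G)^-1)%g =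
  eps a * eps (al + a) * addchar ((be + normth a + al * th a) / normth (al + a)) *
  \sum_b addchar (((normth a)^-1 + (normth (al + a))^-1) * b).
Proof.
move=> a0 aa0; rewrite mulr_sumr; apply: eq_bigr => b _.
rewrite Agrp_mulVE /= !skew_signE /= a0 aa0 !mul1r.
have -> : be + b + normth a + al * th a = (be + normth a + al * th a) + b by ring.
rewrite mulrDl [(_ + _) * b]mulrDl !addcharD [b / _]mulrC [b / _]mulrC; ring.
Qed.

Definition indZ (x : G) : R := (x.1 == 0)%:R.

Lemma conv_skew_sign (h : G) :
  convg f f h = - q ^+ 2 * (h == 1)%g%:R + q * indZ h.
Proof.
case: h => al be; rewrite /convg sum_Agrp /indZ Agrp_oneE xpair_eqE /=.
have [->|al0] := eqVneq al 0.
  have inner a : \sum_b f (a, b) * f (((0, be) : G) * ((a, b) : G)^-1)%g =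
      q * (a == 0)%:R - q * addchar (be / normth a).
    have [->|a0] := eqVneq a 0.
      rewrite big1 => [|b _]; last by rewrite skew_sign_center ?mul0r.
      by rewrite /normth mul0r invr0 mulr0 addchar0 mulr1 subrr.
    rewrite sum_skew_sign_mulV ?add0r // eps_sqr // mul0r addr0 (addrr_pchar2 pchar2F).
    rewrite (eq_bigr (fun=> 1)) => [|b _]; last by rewrite mul0r addchar0.
    rewrite sumr_const mulrDl divff ?normth_eq0 // addcharD addchar1.
    by rewrite /=; ring.
  have sum_delta0 : \sum_(a : F) (a == 0)%:R = 1 :> R.
    by rewrite (bigD1 0) //= eqxx big1 ?addr0 // => a /negPf ->.
  under eq_bigr => a _ do rewrite inner.
  by rewrite sumrB -!mulr_sumr sum_delta0 sum_addchar_div_normth /=; ring.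
rewrite big1 => [|a _]; first by rewrite /=; ring.
have [a0|a_neq0] := eqVneq a 0.
  by rewrite big1 // => b _; rewrite skew_sign_center ?mul0r.
have [aa0|aa_neq0] := eqVneq (al + a) 0.
  by rewrite big1 // => b _; rewrite [f (_ * _)%g]skew_sign_center ?mulr0 // Agrp_mulVE.
rewrite sum_skew_sign_mulV // sum_addchar_mul ?mulr0 //.
rewrite addr_eq0 (oppr_pchar2 pchar2F); apply: contra al0 => /eqP /invr_inj /normth_inj.
by move/(congr1 (fun x => x - a)); rewrite subrr addrK => <-.
Qed.

Lemma conv_indZ_skew_sign (h : G) : convg indZ f h = 0.
Proof.
case: h => al be; rewrite /convg sum_Agrp (bigD1 0) //= [X in _ + X]big1 ?addr0; last first.
  by move=> a /negPf a0; apply: big1 => b _; rewrite /indZ /= a0 mul0r.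
under eq_bigr => b _ do rewrite /indZ /= eqxx mul1r Agrp_mulVE /= /normth !rmorph0 !mulr0 !addr0.
have [->|al0] := eqVneq al 0; first by apply: big1 => b _; rewrite skew_sign_center.
under eq_bigr => b _ do rewrite skew_signE /= al0 mul1r mulrDl addcharD [b / _]mulrC.
by rewrite -!mulr_sumr sum_addchar_mul ?mulr0 // invr_eq0 normth_eq0.
Qed.

Lemma normr_skew_sign_add_indZ (h : G) : `|f h + indZ h| = 1.
Proof.
have [h1|h1] := eqVneq h.1 0.
  by rewrite skew_sign_center // /indZ h1 eqxx add0r normr1.
by rewrite /indZ (negPf h1) addr0 skew_sign_xor ?mem_C_xor // normr_sign.
Qed.

Lemma group_mx_skew_sign_sqr :
  group_mx f *m group_mx f = - q ^+ 2 *: 1%:M + q *: group_mx indZ.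
Proof.
rewrite mul_group_mx -group_mx1 -group_mx_lin; congr group_mx.
by apply/funext => h; rewrite conv_skew_sign.
Qed.

Lemma group_mx_indZ_skew_sign : group_mx indZ *m group_mx f = 0.
Proof.
rewrite mul_group_mx -group_mx0; congr group_mx.
by apply/funext => h; rewrite conv_indZ_skew_sign.
Qed.
End OddDegreeField.

Section ExpmCubic.
Local Open Scope classical_set_scope.
Variables (R : realType) (n : nat) (A : 'M[R]_n) (q : R).
Hypotheses (q_neq0 : q != 0) (A3 : A *m (A *m A) = - q ^+ 2 *: A).

Lemma mxpowS k : mxpow A k.+1 = A *m mxpow A k.
Proof. by []. Qed.

Lemma mxpow_odd j : mxpow A j.*2.+1 = (- q ^+ 2) ^+ j *: A.
Proof.
elim: j => [|j IH]; first by rewrite /mxpow /= mulmx1 scale1r.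
by rewrite doubleS 2!mxpowS IH -!scalemxAr A3 scalerA -exprSr.
Qed.

Lemma mxpow_even j : mxpow A j.*2.+2 = (- q ^+ 2) ^+ j *: (A *m A).
Proof. by rewrite mxpowS mxpow_odd -scalemxAr. Qed.

Lemma cvg_series_delta0 : series (fun k : nat => (k == 0)%:R : R) @ \oo --> (1 : R).
Proof.
rewrite -cvg_shiftS.
have -> : [sequence series (fun k : nat => (k == 0)%:R : R) N.+1]_N = fun=> 1.
  apply/funext => N /=; rewrite /series /= big_nat_recl //= big1 ?addr0 //.
exact: cvg_cst.
Qed.

Lemma expm_term t k :
  t ^+ k / k`!%:R *: mxpow A k = (k == 0)%:R *: 1%:M
    + (sin_coeff (q * t) k / q) *: A
    + (((k == 0)%:R - cos_coeff (q * t) k) / q ^+ 2) *: (A *m A).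
Proof.
have fact_neq0 i : i`!%:R != 0 :> R by rewrite pnatr_eq0 -lt0n fact_gt0.
rewrite /sin_coeff /cos_coeff /=.
have [k0|k_gt0] := posnP k.
  rewrite k0 /= expr0 fact0 divr1 !mul0r !scale0r !addr0 scale1r -exprnP expr0.
  by rewrite !mul1r invr1 subrr mul0r scale0r addr0.
have [[j kE]|[j kE]] : (exists j, k = j.*2.+1) \/ (exists j, k = j.*2.+2).
  have k_half := odd_double_half k; case: (odd k) k_half => /= k_half.
    by left; exists k./2.
  right; exists k./2.-1; lia.
- rewrite kE mxpow_odd scalerA /= odd_double /= doubleK !mul0r subrr mul0r.
  rewrite !scale0r add0r addr0 mul1r; congr (_ *: A).
  rewrite [(q * t) ^+ _]exprMn [(- q ^+ 2) ^+ _]exprNn !(exprSr _ j.*2) -mul2n.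
  rewrite !(exprM _ 2 j).
  by field; rewrite q_neq0 fact_neq0.
- rewrite kE mxpow_even scalerA /= odd_double /= doubleK !mul0r scale0r add0r.
  rewrite -exprnP scale0r add0r sub0r mul1r; congr (_ *: _).
  rewrite [(q * t) ^+ _]exprMn [(- q ^+ 2) ^+ _]exprNn -doubleS -mul2n !(exprM _ 2).
  rewrite !(exprS _ j).
  by field; rewrite q_neq0 fact_neq0.
Qed.

Lemma expm_cubic t : expm t A =
  1%:M + (sin (q * t) / q) *: A + ((1 - cos (q * t)) / q ^+ 2) *: (A *m A).
Proof.
apply/matrixP => i j; rewrite [LHS]mxE.
pose delta0 (k : nat) : R := (k == 0)%:R.
have termE k : t ^+ k / k`!%:R * mxpow A k i j = delta0 k * (1%:M : 'M[R]_n) i j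
    + sin_coeff (q * t) k / q * A i j
    + (delta0 k - cos_coeff (q * t) k) / q ^+ 2 * (A *m A) i j.
  by have := congr1 (fun M : 'M[R]_n => M i j) (expm_term t k); rewrite !mxE.
have -> : series (fun k => t ^+ k / k`!%:R * mxpow A k i j) =
    (fun N => series delta0 N * (1%:M : 'M[R]_n) i j + series (sin_coeff (q * t)) N / q * A i j
      + (series delta0 N - series (cos_coeff (q * t)) N) / q ^+ 2 * (A *m A) i j).
  apply/funext => N; rewrite /series /= -sumrB !mulr_suml -!big_split /=.
  by apply: eq_bigr => k _; rewrite termE.
have cvg_sin : series (sin_coeff (q * t)) @ \oo --> sin (q * t).
  by rewrite unlock; exact: is_cvg_series_sin_coeff.
have cvg_cos : series (cos_coeff (q * t)) @ \oo --> cos (q * t).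
  by rewrite unlock; exact: is_cvg_series_cos_coeff.
have -> : (1%:M + (sin (q * t) / q) *: A + ((1 - cos (q * t)) / q ^+ 2) *: (A *m A)) i j
    = 1 * (1%:M : 'M[R]_n) i j + sin (q * t) / q * A i j
      + (1 - cos (q * t)) / q ^+ 2 * (A *m A) i j by rewrite !mxE mul1r.
apply: cvg_lim => //.
apply: cvgD; first apply: cvgD.
- by apply: cvgMl; exact: cvg_series_delta0.
- by apply: cvgMl; apply: cvgMl.
- by apply: cvgMl; apply: cvgMl; apply: cvgB; [exact: cvg_series_delta0|].
Qed.
End ExpmCubic.

Lemma expm_pihalf (R : realType) (n : nat) (A J : 'M[R]_n) (q : R) : 0 < q ->
  A *m A = - q ^+ 2 *: 1%:M + q *: J -> J *m A = 0 ->
  expm (pi / 2 / q) A = q^-1 *: (A + J).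
Proof.
move=> q_gt0 A2 JA; have q_neq0 : q != 0 by rewrite gt_eqF.
have A3 : A *m (A *m A) = - q ^+ 2 *: A.
  by rewrite mulmxA A2 mulmxDl -!scalemxAl mul1mx JA scaler0 addr0.
rewrite (expm_cubic q_neq0 A3).
have -> : q * (pi / 2 / q) = pi / 2 by field.
rewrite sin_pihalf cos_pihalf subr0 A2.
by apply/matrixP => i j; rewrite !mxE; field.
Qed.

Lemma skew_adjE (gT : finGroupType) (R : realType) (C : {set gT}) :
  skew_adj R C = group_mx (skew_sign R C).
Proof. by apply/matrixP => i j; rewrite !mxE /skew_sign /is_arc invMg invgK. Qed.

Local Close Scope ring_scope.

Theorem mainTheorem1 (m : nat) (Hm : (1 <= m)%N)
  (F : finFieldType) (HF : #|F| = (2 ^ (2 * m + 1))%N)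
  (th : {rmorphism F -> F}) (Hthbij : bijective th)
  (Hgen : forall sigma : {rmorphism F -> F}, bijective sigma ->
            exists k : nat, forall x, sigma x = iter k th x)
  (C : {set Agrp th})
  (HCord : forall c, c \in C -> #[c]%g = 4%N)
  (HCcl : forall c, c \in C -> (c ^: [set: Agrp th] \subset C)%g)
  (HCchoice : forall g : Agrp th, #[g]%g = 4%N ->
      ((g ^: [set: Agrp th] \subset C) (+) ((g ^: [set: Agrp th])^-1 \subset C))%g)
  (R : realType) :
  uniform_mixing (skew_adj R C) (pi / (2 ^+ (2 * m + 2))%:R)%R.
Proof.
pose q : R := (#|F|%:R)%R.
have q_gt0 : (0 < q)%R by rewrite ltr0n HF expn_gt0.
have tauE : (pi / (2 ^+ (2 * m + 2))%:R = pi / 2 / q :> R)%R.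
  have -> : (2 * m + 2 = (2 * m + 1).+1)%N by rewrite addn1 addn2.
  rewrite /q HF natrXE !natrX exprS.
  by field; rewrite expf_neq0 // pnatr_eq0.
set S := group_mx (skew_sign R C).
have expE : expm (pi / 2 / q)%R S = (q^-1 *: (S + group_mx (@indZ _ th R)))%R.
  apply: expm_pihalf => //.
    exact: (group_mx_skew_sign_sqr HF Hgen R HCord HCcl HCchoice).
  exact: (group_mx_indZ_skew_sign HF Hgen R HCord HCcl HCchoice).
move=> i j i' j'; rewrite skew_adjE tauE expE !mxE !normrM.
by rewrite !(normr_skew_sign_add_indZ HF R HCord HCcl HCchoice).
Qed.
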